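(* Let $\alpha,\beta<\omega^\omega$ and $m\in\mathbb{N}$. If $\alpha\le\beta$ and $\mathrm{MC}(\alpha)<m$, then $\alpha[m]\le\beta[m]$.
   Context: Ordinals $\alpha<\omega^\omega$ are written in Cantor normal form $\alpha=\omega^{n_0}+\dots+\omega^{n_{k-1}}$ with $n_0\ge\dots\ge n_{k-1}$, ordered as usual for ordinals. Writing $\alpha=\omega^{n}\cdot k_n+\dots+\omega^0\cdot k_0$ (with $\omega^j\cdot k$ the sum of $k$ copies of $\omega^j$), $\mathrm{MC}(\alpha)=\max\{k_n,\dots,k_0\}$. For $m\in\mathbb{N}$: $0[m]=0$, $(\beta+1)[m]=\beta$, and $(\beta+\omega^{n})[m]=\beta+\omega^{n-1}\cdot m$ for $n\ge1$ (with $\beta+\omega^n$ in Cantor normal form). *)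

From mathcomp Require Import all_boot.
Set Implicit Arguments. Unset Strict Implicit. Unset Printing Implicit Defensive.

(* Ordinals below omega^omega in Cantor normal form:
   alpha = omega^(n_0) + ... + omega^(n_{k-1}) with n_0 >= ... >= n_{k-1},
   represented by the list [:: n_0; ...; n_{k-1}] of exponents
   ([::] is the ordinal 0). *)
Definition is_cnf (s : seq nat) : bool := sorted geq s.

(* The usual ordinal order on CNFs: lexicographic comparison of the exponent
   lists, a proper prefix being smaller. *)
Fixpoint cnf_le (a b : seq nat) : bool :=
  match a, b with
  | [::], _ => true
  | _ :: _, [::] => false
  | x :: a', y :: b' => (x < y) || ((x == y) && cnf_le a' b')
  end.

(* MC(alpha) = max of the coefficients k_j in omega^n*k_n + ... + omega^0*k_0,
   i.e. the maximal multiplicity of an exponent in the CNF (0 for alpha = 0). *)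
Definition MC (a : seq nat) : nat := \max_(j <- a) count_mem j a.

(* Fundamental sequence: 0[m] = 0, (b+1)[m] = b,
   (b + omega^n)[m] = b + omega^(n-1)*m for n >= 1 (the last CNF term is
   replaced by m copies of omega^(n-1)). *)
Fixpoint fs (a : seq nat) (m : nat) : seq nat :=
  match a with
  | [::] => [::]
  | [:: 0] => [::]
  | [:: n.+1] => nseq m n
  | x :: a' => x :: fs a' m
  end.

(* If alpha <= beta, then either their CNFs first differ at a position where
   beta has the larger exponent y, or alpha is a prefix of beta.  Since [fs]
   only rewrites the last term, the common part survives in both fundamental
   sequences and the comparison is decided at the first difference.  The only
   delicate case is beta ending there with the single term omega^y, so that
   beta[m] ends with m copies of omega^(y-1): all exponents of the rest of
   alpha[m] are then at most y-1, and y-1 occurs fewer than m times because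
   MC(alpha) < m. *)

From mathcomp Require Import all_boot.

Set Implicit Arguments.
Unset Strict Implicit.
Unset Printing Implicit Defensive.

Lemma fs_cons z s m : s != [::] -> fs (z :: s) m = z :: fs s m.
Proof. by case: s => [|w s] //; case: z. Qed.

Lemma fs_rcons s n m :
  fs (rcons s n) m = s ++ (if n is n'.+1 then nseq m n' else [::]).
Proof.
elim: s => [|x s IH]; first by case: n.
by rewrite rcons_cons fs_cons ?IH // -size_eq0 size_rcons.
Qed.

Lemma all_fs (P : pred nat) a m :
  (forall n, P n.+1 -> P n) -> all P a -> all P (fs a m).
Proof.
move=> P_pred; case/lastP: a => // s n.
rewrite fs_rcons all_rcons all_cat => /andP[Pn ->].
by case: n Pn => //= n /P_pred Pn; rewrite all_nseq Pn orbT.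
Qed.

Lemma count_mem_fs z a m :
  all (fun y => y <= z) a -> count_mem z (fs a m) <= count_mem z a.
Proof.
case/lastP: a => // s n; rewrite fs_rcons all_rcons -cats1 !count_cat.
case/andP=> le_nz _; rewrite leq_add2l.
by case: n le_nz => //= n lt_nz; rewrite count_nseq /= ltn_eqF.
Qed.

Lemma cnf_le_cons x a y b :
  cnf_le (x :: a) (y :: b) = (x < y) || (x == y) && cnf_le a b.
Proof. by []. Qed.

Lemma cnf_le_refl s : cnf_le s s.
Proof. by elim: s => //= x s ->; rewrite eqxx orbT. Qed.

Lemma cnf_le_lt_head y s t : all (fun z => z < y) s -> cnf_le s (y :: t).
Proof. by case: s => //= x s /andP[-> _]. Qed.

Lemma cnf_le_nseq z k s :
  all (fun y => y <= z) s -> count_mem z s < k -> cnf_le s (nseq k z).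
Proof.
elim: s k => [|y s IH] [|k] //= /andP[le_yz le_sz].
have [-> | ne_yz] := eqVneq y z.
  by rewrite ltnn add1n ltnS => /(IH _ le_sz).
by move=> _; rewrite ltn_neqAle ne_yz le_yz.
Qed.

Lemma cnf_head_max x a : is_cnf (x :: a) -> all (fun z => z <= x) a.
Proof.
by apply: order_path_min => p q r le_qp le_rq; apply: leq_trans le_rq le_qp.
Qed.

Lemma count_mem_le_MC j a : count_mem j a <= MC a.
Proof.
have [j_in_a | /count_memPn -> //] := boolP (j \in a).
exact: (@leq_bigmax_seq _ a xpredT (fun i => count_mem i a) j j_in_a).
Qed.

Lemma MC_cons x a : MC a <= MC (x :: a).
Proof.
apply/bigmax_leqP_seq => j _ _.
by apply: leq_trans (count_mem_le_MC j (x :: a)); rewrite /= leq_addl.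
Qed.

Lemma cnf_le_fs_lt_head y s t m :
  all (fun z => z < y) s -> MC s < m -> cnf_le (fs s m) (fs (y :: t) m).
Proof.
move=> lt_s_y MC_lt_m.
have fs_lt_y : all (fun z => z < y) (fs s m) by apply: all_fs lt_s_y => n /ltnW.
case: t => [|w t]; last by rewrite fs_cons //; apply: cnf_le_lt_head.
case: y lt_s_y fs_lt_y => [|y] lt_s_y; first by case: (fs s m).
move=> fs_le_y; apply: cnf_le_nseq => //.
apply: leq_ltn_trans (count_mem_fs m lt_s_y) _.
exact: leq_ltn_trans (count_mem_le_MC _ _) MC_lt_m.
Qed.

Theorem lemma1p2 (alpha beta : seq nat) (m : nat) :
  is_cnf alpha -> is_cnf beta ->
  cnf_le alpha beta -> MC alpha < m ->
  cnf_le (fs alpha m) (fs beta m).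
Proof.
elim: alpha beta => [|x a IH] [|y b] // cnf_xa cnf_yb.
rewrite cnf_le_cons => /orP[lt_xy | /andP[/eqP<- le_ab]] MC_lt_m.
  apply: cnf_le_fs_lt_head MC_lt_m; rewrite /= lt_xy.
  by apply: sub_all (cnf_head_max cnf_xa) => z /leq_ltn_trans; apply.
case: a IH cnf_xa le_ab MC_lt_m => [|v a] IH cnf_xa le_ab MC_lt_m.
  case: b {cnf_yb le_ab} => [|w b]; first exact: cnf_le_refl.
  rewrite (@fs_cons x (w :: b)) //; apply: cnf_le_lt_head.
  by case: x {cnf_xa MC_lt_m} => //= x; rewrite all_nseq ltnSn orbT.
case: b cnf_yb le_ab => [|w b] // cnf_yb le_ab.
rewrite (@fs_cons x (v :: a)) // (@fs_cons x (w :: b)) // cnf_le_cons eqxx ltnn /=.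
apply: IH (path_sorted cnf_xa) (path_sorted cnf_yb) le_ab _.
exact: leq_ltn_trans (MC_cons x _) MC_lt_m.
Qed.
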